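(* For real $m>0$ let $\lambda_{1,m}=m^2+\gamma_{1,m}^2$, where $\gamma_{1,m}$ is the unique $\gamma\in\left(\frac{\pi}{2},\pi\right)$ with $\gamma\tan\gamma=-m\tanh m$. Then there exists $m^*\in(0,+\infty)$ such that $\lambda_{1,m^*}=\min_{m>0}\lambda_{1,m}$.
   Context: This concerns the rectangle case $\ell=1$: for integer $m\ge1$, $\lambda_{1,m}$ is an eigenvalue of $\Delta^2u=-\lambda\Delta u$ on $(0,\pi)\times(-1,1)$ with $u=0$ on the boundary, $u_y=0$ on $y=\pm1$, $u_{xx}=0$ on $x\in\{0,\pi\}$; here $m$ ranges over all positive reals. *)

From Stdlib Require Import Reals ClassicalEpsilon.
Open Scope R_scope.

Definition is_gamma1 (m g : R) : Prop :=
  PI / 2 < g < PI /\ g * tan g = - (m * tanh m).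

Definition gamma1 (m : R) : R :=
  epsilon (inhabits 0) (fun g => is_gamma1 m g).

Definition lambda1 (m : R) : R := m ^ 2 + gamma1 m ^ 2.

(* [gamma_{1,m}] is the inverse of [x |-> x tan x] on [(PI/2, PI)], evaluated at
   [- m tanh m].  On [(PI/2, PI]] this function is continuous and strictly increasing
   (its derivative is positive as soon as [x >= 1]), tends to [-oo] at [PI/2] and
   vanishes at [PI]; hence the inverse is well defined and continuous on [(-oo, 0)]
   (a monotone inverse), and [lambda_{1,m}] is continuous in [m > 0].  Coercivity
   at both ends of [(0, +oo)]: [lambda_{1,m} > m^2 > PI^2] for [m > PI], while
   [m tanh m < m] forces [gamma_{1,m} > 3.13] for small [m].  At [m = 1.7] one has
   [gamma_{1,m} < 5 PI / 6], so [lambda_{1,1.7} < 1.7^2 + (5 PI / 6)^2 < 3.13^2];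
   the minimum of [lambda_1] over a compact interval [[a, PI]] is therefore global. *)

From Stdlib Require Import Reals Ranalysis5 Lra ClassicalEpsilon.
Open Scope R_scope.

Lemma derivable_pt_lim_tan x : cos x <> 0 -> derivable_pt_lim tan x (1 + tan x ^ 2).
Proof.
  intros Hc.
  replace (1 + tan x ^ 2) with ((cos x * cos x - (- sin x) * sin x) / (cos x)²).
  2:{ pose proof (sin2_cos2 x) as H1. unfold tan, Rsqr in *. field_simplify_eq; [lra | exact Hc]. }
  apply (derivable_pt_lim_div sin cos); auto.
  - apply derivable_pt_lim_sin.
  - apply derivable_pt_lim_cos.
Qed.

Definition xtan (x : R) : R := x * tan x.

Lemma derivable_pt_lim_xtan x :
  cos x <> 0 -> derivable_pt_lim xtan x (tan x + x * (1 + tan x ^ 2)).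
Proof.
  intros Hc. replace (tan x + x * (1 + tan x ^ 2)) with (1 * tan x + x * (1 + tan x ^ 2)) by ring.
  apply (derivable_pt_lim_mult id tan).
  - apply derivable_pt_lim_id.
  - apply derivable_pt_lim_tan, Hc.
Qed.

Lemma cos_neq_0_PI2_PI x : PI / 2 < x <= PI -> cos x <> 0.
Proof. intros Hx. apply Rlt_not_eq, cos_lt_0; pose proof PI_RGT_0; lra. Qed.

Lemma continuity_pt_xtan x : PI / 2 < x <= PI -> continuity_pt xtan x.
Proof.
  intros Hx. apply derivable_continuous_pt.
  exists (tan x + x * (1 + tan x ^ 2)). apply derivable_pt_lim_xtan, cos_neq_0_PI2_PI, Hx.
Qed.

(* For [x >= 1] the derivative [tan x + x (1 + tan^2 x)] is at least [(tan x + 1/2)^2 + 3/4]. *)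
Lemma xtan_increasing x y : PI / 2 < x -> x < y -> y <= PI -> xtan x < xtan y.
Proof.
  intros Hx Hxy Hy.
  destruct (MVT_cor2 xtan (fun z => tan z + z * (1 + tan z ^ 2)) x y Hxy) as [c [Heq Hc]].
  { intros c Hc. apply derivable_pt_lim_xtan, cos_neq_0_PI2_PI. lra. }
  assert (Hpos : 0 < tan c + c * (1 + tan c ^ 2)).
  { pose proof PI2_1. pose proof (pow2_ge_0 (tan c + 1 / 2)).
    assert (0 <= (c - 1) * (1 + tan c ^ 2)) by (apply Rmult_le_pos; nra). nra. }
  nra.
Qed.

Lemma xtan_PI : xtan PI = 0.
Proof. unfold xtan. rewrite tan_PI. ring. Qed.

Lemma tan_PI2_plus x : 0 < x < PI / 2 -> tan (PI / 2 + x) = - / tan x.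
Proof.
  intros Hx. assert (0 < sin x) by (apply sin_gt_0; lra).
  assert (0 < cos x) by (apply cos_gt_0; lra).
  unfold tan. rewrite sin_plus, cos_plus, sin_PI2, cos_PI2. field. lra.
Qed.

Lemma xtan_unbounded_below y : y < 0 -> exists x, PI / 2 < x < PI /\ xtan x < y.
Proof.
  intros Hy. pose proof (atan_bound (- / y)) as Hb.
  assert (Hpos : 0 < atan (- / y)).
  { rewrite <- atan_0. apply atan_increasing.
    assert (/ y < 0) by (apply Rinv_lt_0_compat, Hy). lra. }
  exists (PI / 2 + atan (- / y)). split; [lra |].
  unfold xtan. rewrite tan_PI2_plus, tan_atan by lra.
  pose proof PI2_1. field_simplify; [nra | lra].
Qed.

Lemma xtan_surj y : y < 0 -> exists x, PI / 2 < x < PI /\ xtan x = y.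
Proof.
  intros Hy. destruct (xtan_unbounded_below y Hy) as [a [Ha Hay]].
  destruct (IVT_interv (fun x => xtan x - y) a PI) as [x [Hx Hxy]].
  - intros x Hx. apply continuity_pt_minus.
    + apply continuity_pt_xtan. lra.
    + apply continuity_pt_const. intros u v. reflexivity.
  - lra.
  - lra.
  - rewrite xtan_PI. lra.
  - exists x. assert (x <> PI) by (intros ->; rewrite xtan_PI in Hxy; lra).
    split; lra.
Qed.

Definition xtan_inv (y : R) : R :=
  epsilon (inhabits 0) (fun x => PI / 2 < x < PI /\ xtan x = y).

Lemma xtan_inv_spec y : y < 0 -> PI / 2 < xtan_inv y < PI /\ xtan (xtan_inv y) = y.
Proof.
  intros Hy. apply (epsilon_spec (inhabits 0) (fun x => PI / 2 < x < PI /\ xtan x = y)).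
  apply xtan_surj, Hy.
Qed.

Lemma xtan_le x y : PI / 2 < x -> x <= y -> y <= PI -> xtan x <= xtan y.
Proof.
  intros Hx Hxy Hy. destruct (Req_dec x y) as [->|]; [lra |].
  left. apply xtan_increasing; lra.
Qed.

Lemma xtan_inv_lt y x : y < 0 -> PI / 2 < x <= PI -> y < xtan x -> xtan_inv y < x.
Proof.
  intros Hy Hx Hxy. destruct (xtan_inv_spec y Hy) as [Hb Hb'].
  destruct (Rlt_or_le (xtan_inv y) x) as [|Hle]; [assumption | exfalso].
  pose proof (xtan_le x (xtan_inv y)). lra.
Qed.

Lemma xtan_inv_gt y x : y < 0 -> PI / 2 < x <= PI -> xtan x < y -> x < xtan_inv y.
Proof.
  intros Hy Hx Hxy. destruct (xtan_inv_spec y Hy) as [Hb Hb'].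
  destruct (Rlt_or_le x (xtan_inv y)) as [|Hle]; [assumption | exfalso].
  pose proof (xtan_le (xtan_inv y) x). lra.
Qed.

Lemma continuity_pt_xtan_inv y : y < 0 -> continuity_pt xtan_inv y.
Proof.
  intros Hy.
  destruct (xtan_inv_spec (2 * y)) as [[Hl1 Hl2] Hl]; [lra |].
  destruct (xtan_inv_spec (y / 2)) as [[Hu1 Hu2] Hu]; [lra |].
  set (lb := xtan_inv (2 * y)) in *. set (ub := xtan_inv (y / 2)) in *.
  assert (Hlu : lb < ub).
  { unfold lb. apply xtan_inv_lt; lra. }
  apply (continuity_pt_recip_interv xtan xtan_inv lb ub Hlu).
  - intros u v Hu' Huv Hv. apply xtan_increasing; lra.
  - intros z Hz1 Hz2. apply (xtan_inv_spec z). lra.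
  - intros z Hz1 Hz2. destruct (xtan_inv_spec z) as [Hz Hxz]; [lra |]. split.
    + destruct (Rle_or_lt lb (xtan_inv z)) as [|Hlt]; [assumption | exfalso].
      pose proof (xtan_increasing (xtan_inv z) lb). lra.
    + destruct (Rle_or_lt (xtan_inv z) ub) as [|Hlt]; [assumption | exfalso].
      pose proof (xtan_increasing ub (xtan_inv z)). lra.
  - intros a Ha. apply continuity_pt_xtan. lra.
  - lra.
Qed.

Lemma tanh_exp x : tanh x = (exp (2 * x) - 1) / (exp (2 * x) + 1).
Proof.
  unfold tanh, sinh, cosh. replace (2 * x) with (x + x) by ring.
  rewrite exp_plus, exp_Ropp. pose proof (exp_pos x). field. nra.
Qed.

Lemma tanh_bounds x : 0 < x -> 0 < tanh x < 1.
Proof.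
  intros Hx. rewrite tanh_exp.
  assert (1 < exp (2 * x)) by (rewrite <- exp_0; apply exp_increasing; lra).
  split.
  - apply Rdiv_lt_0_compat; lra.
  - apply Rmult_lt_reg_r with (exp (2 * x) + 1); [lra |].
    unfold Rdiv. rewrite Rmult_assoc, Rinv_l; lra.
Qed.

Lemma continuity_pt_tanh x : continuity_pt tanh x.
Proof.
  unfold tanh, sinh, cosh. reg. pose proof (exp_pos x). pose proof (exp_pos (- x)). lra.
Qed.

Lemma gamma1_xtan_inv m : gamma1 m = xtan_inv (- (m * tanh m)).
Proof. reflexivity. Qed.

Lemma continuity_pt_gamma1 m : 0 < m -> continuity_pt gamma1 m.
Proof.
  intros Hm. pose proof (tanh_bounds m Hm).
  apply (continuity_pt_comp (fun x => - (x * tanh x)) xtan_inv).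
  - pose proof (continuity_pt_tanh m). reg.
  - apply continuity_pt_xtan_inv. nra.
Qed.

Lemma continuity_pt_lambda1 m : 0 < m -> continuity_pt lambda1 m.
Proof. intros Hm. pose proof (continuity_pt_gamma1 m Hm). unfold lambda1. reg. Qed.

Lemma min_on_pos_of_continuous (f : R -> R) (a b c : R) :
  0 < a -> a <= c <= b -> (forall x, a <= x <= b -> continuity_pt f x) ->
  (forall x, 0 < x -> x < a \/ b < x -> f c <= f x) ->
  exists x, 0 < x /\ forall y, 0 < y -> f x <= f y.
Proof.
  intros Ha Hc Hf Hout.
  destruct (continuity_ab_min f a b ltac:(lra) Hf) as [x [Hmin Hx]].
  exists x. split; [lra |]. intros y Hy.
  destruct (Rlt_or_le y a); [| destruct (Rle_or_lt y b)].
  - apply Rle_trans with (f c); [apply Hmin; lra | apply Hout; lra].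
  - apply Hmin. lra.
  - apply Rle_trans with (f c); [apply Hmin; lra | apply Hout; lra].
Qed.

Lemma PI_bounds : 3.14 < PI < 3.1416.
Proof.
  pose proof (PI_2_3_7_ineq 1) as H1. pose proof (PI_2_3_7_ineq 2) as H2.
  unfold tg_alt, PI_2_3_7_tg, Ratan_seq in H1, H2. simpl in H1, H2. lra.
Qed.

Lemma sqrt_3_gt : 1.732 < sqrt 3.
Proof. pose proof (sqrt_sqrt 3 ltac:(lra)). pose proof (sqrt_pos 3). nra. Qed.

Lemma pow_le_exp_mult x n : 0 <= x -> (1 + x) ^ n <= exp (INR n * x).
Proof.
  intros Hx. induction n as [| n IH].
  - simpl. rewrite Rmult_0_l, exp_0. lra.
  - rewrite S_INR, Rmult_plus_distr_r, Rmult_1_l, exp_plus. simpl.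
    rewrite Rmult_comm. apply Rmult_le_compat.
    + apply pow_le. lra.
    + lra.
    + exact IH.
    + apply exp_ineq1_le.
Qed.

Lemma tan_5PI6 : tan (5 * PI / 6) = - (1 / sqrt 3).
Proof.
  replace (5 * PI / 6) with (PI - PI / 6) by field.
  rewrite Rtrigo_facts.tan_pi_minus, tan_PI6; [reflexivity |].
  apply Rgt_not_eq, cos_gt_0; pose proof PI_RGT_0; lra.
Qed.

(* [xtan (5 PI / 6) = - 5 PI / (6 sqrt 3) < -1.52 < - 1.7 tanh 1.7], using [exp 3.4 >= 1.34 ^ 10 > 18]. *)
Lemma gamma1_17_lt : gamma1 1.7 < 5 * PI / 6.
Proof.
  pose proof PI_bounds. pose proof sqrt_3_gt.
  assert (Hexp : 18 < exp (2 * 1.7)).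
  { pose proof (pow_le_exp_mult 0.34 10 ltac:(lra)) as Hpow.
    replace (INR 10 * 0.34) with (2 * 1.7) in Hpow by (simpl; lra). simpl in Hpow. lra. }
  assert (Hh : 1.52 < 1.7 * tanh 1.7).
  { rewrite tanh_exp. apply Rmult_lt_reg_r with (exp (2 * 1.7) + 1); [lra |].
    field_simplify; lra. }
  rewrite gamma1_xtan_inv. apply xtan_inv_lt; [lra | lra |].
  unfold xtan. rewrite tan_5PI6.
  apply Ropp_lt_cancel. rewrite Ropp_involutive.
  replace (- (5 * PI / 6 * - (1 / sqrt 3))) with (5 * PI / (6 * sqrt 3)) by (field; lra).
  apply Rlt_trans with 1.52; [| exact Hh].
  apply Rmult_lt_reg_r with (6 * sqrt 3); [lra |].
  field_simplify; lra.
Qed.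

Lemma lambda1_17_lt : lambda1 1.7 < 1.7 ^ 2 + (5 * PI / 6) ^ 2.
Proof.
  pose proof gamma1_17_lt. pose proof PI_RGT_0.
  destruct (xtan_inv_spec (- (1.7 * tanh 1.7))) as [[Hg _] _].
  { pose proof (tanh_bounds 1.7). lra. }
  rewrite <- gamma1_xtan_inv in Hg. unfold lambda1. nra.
Qed.

Lemma gamma1_gt m x : 0 < m -> PI / 2 < x < PI -> m <= - xtan x -> x < gamma1 m.
Proof.
  intros Hm Hx Hmx. pose proof (tanh_bounds m Hm).
  rewrite gamma1_xtan_inv. apply xtan_inv_gt; [nra | lra | nra].
Qed.

Theorem theorem5p3 :
  exists mstar : R, 0 < mstar /\
    forall m : R, 0 < m -> lambda1 mstar <= lambda1 m.
Proof.
  pose proof PI_bounds. pose proof lambda1_17_lt.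
  assert (Hxtan : xtan 3.13 < 0) by (rewrite <- xtan_PI; apply xtan_increasing; lra).
  set (a := Rmin 1 (- xtan 3.13)).
  assert (Ha : 0 < a <= 1 /\ a <= - xtan 3.13).
  { split; [split; [apply Rmin_pos; lra | apply Rmin_l] | apply Rmin_r]. }
  apply (min_on_pos_of_continuous lambda1 a PI 1.7); [lra | lra | |].
  - intros x Hx. apply continuity_pt_lambda1. lra.
  - intros x Hx [Hsmall | Hlarge]; unfold lambda1 at 2.
    + assert (3.13 < gamma1 x) by (apply gamma1_gt; lra). nra.
    + pose proof (pow2_ge_0 (gamma1 x)). nra.
Qed.
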